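(* Let $X$ be a Banach lattice, $E$ a Banach space and $Y$ a Banach sequence lattice. Then every bounded finite rank operator $S:X\to E$ is $Y$-concave.
   Context: All vector spaces are real. A Banach sequence lattice $Y$ is a Banach space of real sequences which is an ideal with lattice norm (if $|f|\le|g|$ coordinatewise with $g\in Y$ then $f\in Y$ and $\|f\|_Y\le\|g\|_Y$) and contains every canonical unit vector $e_n$; $\|\cdot\|_{\mathbb{R}^n,Y}$ is its restriction to sequences supported in the first $n$ coordinates. Krivine's functional calculus: for a Banach lattice $X$ and $x\in X^n$ there is a unique linear map $\tau_{n,x}$ from the space $\mathcal{H}_n$ of continuous positively 1-homogeneous functions $\mathbb{R}^n\to\mathbb{R}$ into $X$ sending the $j$th coordinate projection to $x_j$ and preserving finite suprema. Set $\|(x_1,\dots,x_n)\|_Y:=\tau_{n,x}(\|\cdot\|_{\mathbb{R}^n,Y})\in X$, $\|x\|_{X^n,Y,\tau}:=\|\|(x_1,\dots,x_n)\|_Y\|_X$, and for a Banach space $E$, $\|(w_1,\dots,w_n)\|_{E^n,Y}:=\|(\|w_1\|_E,\dots,\|w_n\|_E)\|_{\mathbb{R}^n,Y}$. A linear $S:X\to E$ is $Y$-concave if there is $K>0$ with $\|(Sx_1,\dots,Sx_n)\|_{E^n,Y}\le K\|(x_1,\dots,x_n)\|_{X^n,Y,\tau}$ for all $n\in\mathbb{N}$ and $x_j\in X$. *)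

From HB Require Import structures.
From mathcomp Require Import all_boot all_order all_algebra.
From mathcomp Require Import all_classical all_reals all_analysis.
Set Implicit Arguments. Unset Strict Implicit. Unset Printing Implicit Defensive.
Import Order.TTheory GRing.Theory Num.Theory.
Import numFieldNormedType.Exports.
Local Open Scope ring_scope.
Local Open Scope classical_set_scope.

Record banach_lattice (R : realType) (X : completeNormedModType R) := BanachLattice {
  ble : X -> X -> Prop;
  ble_refl : forall x, ble x x;
  ble_trans : forall x y z, ble x y -> ble y z -> ble x z;
  ble_anti : forall x y, ble x y -> ble y x -> x = y;
  ble_add : forall x y z, ble x y -> ble (x + z) (y + z);
  ble_scale : forall (a : R) x y, 0 <= a -> ble x y -> ble (a *: x) (a *: y);
  bsup : X -> X -> X;
  bsup_ubl : forall x y, ble x (bsup x y);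
  bsup_ubr : forall x y, ble y (bsup x y);
  bsup_least : forall x y z, ble x z -> ble y z -> ble (bsup x y) z;
  bnorm_mono : forall x y, ble (bsup x (- x)) (bsup y (- y)) -> `|x| <= `|y|
}.

Definition unit_seq (R : realType) (n : nat) : nat -> R :=
  fun k => if k == n then 1 else 0.

(* A Banach sequence lattice: a linear space [ydom] of real sequences
   (pointwise operations) with a complete norm [ynorm] (meaningful on
   [ydom]), which is an ideal with lattice norm, containing every e_n. *)
Record seq_lattice (R : realType) := SeqLattice {
  ydom : set (nat -> R);
  ynorm : (nat -> R) -> R;
  ydom0 : ydom (fun _ => 0);
  ydomD : forall f g, ydom f -> ydom g -> ydom (fun k => f k + g k);
  ydomZ : forall (a : R) f, ydom f -> ydom (fun k => a * f k);
  ynorm_eq0 : forall f, ydom f -> ynorm f = 0 -> f = (fun _ => 0);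
  ynormZ : forall (a : R) f, ydom f -> ynorm (fun k => a * f k) = `|a| * ynorm f;
  ynormD : forall f g, ydom f -> ydom g ->
    ynorm (fun k => f k + g k) <= ynorm f + ynorm g;
  ycomplete : forall u : nat -> nat -> R, (forall p, ydom (u p)) ->
    (forall e : R, 0 < e -> exists N, forall p q, (N <= p)%N -> (N <= q)%N ->
        ynorm (fun k => u p k - u q k) < e) ->
    exists f, ydom f /\ (forall e : R, 0 < e -> exists N, forall p, (N <= p)%N ->
        ynorm (fun k => u p k - f k) < e);
  yideal : forall f g, ydom g -> (forall k, `|f k| <= `|g k|) ->
    ydom f /\ ynorm f <= ynorm g;
  yunit : forall n, ydom (unit_seq R n)
}.

(* Extension by zero of a vector of R^n to a sequence. *)
Definition ext0 (R : realType) (n : nat) (v : 'rV[R]_n) : nat -> R :=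
  fun k => oapp (fun i : 'I_n => v ord0 i) 0 (insub k).

Definition Ynorm_n (R : realType) (Y : seq_lattice R) (n : nat) (v : 'rV[R]_n) : R :=
  ynorm Y (ext0 v).

Definition EYnorm (R : realType) (E : normedModType R) (Y : seq_lattice R)
  (n : nat) (w : 'I_n -> E) : R :=
  Ynorm_n Y (\row_j `|w j|).

Definition Hn (R : realType) (n : nat) : set ('rV[R]_n -> R) :=
  [set f | continuous f /\
     forall (t : R) (v : 'rV[R]_n), 0 <= t -> f (t *: v) = t * f v].

(* tau is "the" Krivine calculus of x = (x_1,..,x_n): a linear map on H_n
   sending the j-th coordinate projection to x_j and preserving finite
   suprema.  (Krivine's theorem: such a tau exists and is unique.) *)
Definition is_krivine (R : realType) (X : completeNormedModType R)
  (L : banach_lattice X) (n : nat) (x : 'I_n -> X)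
  (tau : ('rV[R]_n -> R) -> X) : Prop :=
  [/\ (forall f g (a b : R), @Hn R n f -> @Hn R n g ->
         tau (fun v => a * f v + b * g v) = a *: tau f + b *: tau g),
      (forall j : 'I_n, tau (fun v => v ord0 j) = x j) &
      (forall f g, @Hn R n f -> @Hn R n g ->
         tau (fun v => Num.max (f v) (g v)) = bsup L (tau f) (tau g))].

(* Y-concavity of a linear S : X -> E.  The quantity
   ||(x_1,..,x_n)||_Y = tau_{n,x}(||.||_{R^n,Y}) is expressed through any
   (hence the unique) Krivine calculus tau of x. *)
Definition Y_concave (R : realType) (X : completeNormedModType R)
  (L : banach_lattice X) (E : completeNormedModType R) (Y : seq_lattice R)
  (S : X -> E) : Prop :=
  exists K : R, 0 < K /\
    forall (n : nat) (x : 'I_n -> X) (tau : ('rV[R]_n -> R) -> X),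
      is_krivine L x tau ->
      EYnorm Y (fun j => S (x j)) <= K * `| tau (@Ynorm_n R Y n) |.

Definition is_linear (R : realType) (X E : normedModType R) (S : X -> E) : Prop :=
  forall (a : R) x y, S (a *: x + y) = a *: S x + S y.

Definition is_bounded (R : realType) (X E : normedModType R) (S : X -> E) : Prop :=
  exists C : R, forall x, `|S x| <= C * `|x|.

Definition finite_rank (R : realType) (X E : normedModType R) (S : X -> E) : Prop :=
  exists (m : nat) (e : 'I_m -> E),
    forall x, exists c : 'I_m -> R, S x = \sum_(i < m) c i *: e i.

From HB Require Import structures.
From mathcomp Require Import all_boot all_order all_algebra.
From mathcomp Require Import all_classical all_reals all_analysis.
From mathcomp Require Import ring lra.
Set Implicit Arguments. Unset Strict Implicit. Unset Printing Implicit Defensive.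
Import Order.TTheory GRing.Theory Num.Theory.
Import numFieldNormedType.Exports.
Local Open Scope ring_scope.
Local Open Scope classical_set_scope.

(* Write S x = sum_i phi_i(x) e_i with (e_i) a basis of a finite-dimensional space
   containing the range of S; the coordinate functionals phi_i are bounded by the
   equivalence of norms in finite dimension.  Since Y has a lattice norm, it suffices
   to bound ||(phi x_j)_j||_{R^n,Y} by ||phi|| ||tau(||.||_{R^n,Y})|| for a single
   bounded functional phi.  Hahn-Banach on R^n gives a linear form g = sum_j b_j v_j
   with |g| <= ||.||_{R^n,Y} and g((phi x_j)_j) = ||(phi x_j)_j||_{R^n,Y}.  Krivine's
   calculus sends g to sum_j b_j x_j, so the left-hand side is phi(tau g), and
   ||tau g|| <= ||tau(||.||_{R^n,Y})|| because tau is monotone and the norm of X is a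
   lattice norm. *)

Lemma lipschitz_continuous (R : realType) (V W : normedModType R) (f : V -> W) (k : R) :
  (forall x y, `|f x - f y| <= k * `|x - y|) -> continuous f.
Proof.
move=> fk x; pose k' := Num.max k 1.
have k'_gt0 : 0 < k' by rewrite lt_max ltr01 orbT.
apply/(@cvgrPdist_lt _ _ _ (nbhs x)) => e e_gt0.
near=> z; apply: (le_lt_trans (fk x z)).
apply: (@le_lt_trans _ _ (k' * `|x - z|)); first by rewrite ler_wpM2r // le_max lexx.
rewrite -ltr_pdivlMl //; near: z; apply: cvgr_dist_lt => //.
by rewrite mulr_gt0 ?invr_gt0.
Unshelve. all: by end_near. Qed.

Lemma mx_entry_norm_le (R : realDomainType) m n (A : 'M[R]_(m, n)) i j : `|A i j| <= `|A|.
Proof.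
rewrite [leRHS]/Num.norm /= mx_normrE; apply/bigmax_geP; right => /=.
by exists (i, j).
Qed.

Section YnormFinite.
Variables (R : realType) (Y : seq_lattice R) (n : nat).
Local Notation N := (@Ynorm_n R Y n).

Lemma ext0_lt (v : 'rV[R]_n) k (kn : (k < n)%N) : ext0 v k = v ord0 (Ordinal kn).
Proof. by rewrite /ext0 insubT. Qed.

Lemma ext0_ge (v : 'rV[R]_n) k : (n <= k)%N -> ext0 v k = 0.
Proof. by move=> nk; rewrite /ext0 insubF // ltnNge nk. Qed.

Lemma ext0D (u v : 'rV[R]_n) : ext0 (u + v) = (fun k => ext0 u k + ext0 v k).
Proof.
apply: funext => k; case: (ltnP k n) => kn; first by rewrite !(ext0_lt _ kn) mxE.
by rewrite !ext0_ge // addr0.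
Qed.

Lemma ext0Z a (v : 'rV[R]_n) : ext0 (a *: v) = (fun k => a * ext0 v k).
Proof.
apply: funext => k; case: (ltnP k n) => kn; first by rewrite !(ext0_lt _ kn) mxE.
by rewrite !ext0_ge // mulr0.
Qed.

Definition seq_indicator (m : nat) : nat -> R := fun k => (k < m)%:R.

Lemma ydom_seq_indicator m : ydom Y (seq_indicator m).
Proof.
elim: m => [|m IHm].
  have -> : seq_indicator 0 = (fun _ => 0) by apply: funext => k; rewrite /seq_indicator ltn0.
  exact: ydom0.
have -> : seq_indicator m.+1 = (fun k => seq_indicator m k + unit_seq R m k).
  apply: funext => k; rewrite /seq_indicator /unit_seq ltnS leq_eqVlt.
  by case: ltngtP; rewrite ?addr0 ?add0r.
exact/ydomD/yunit.
Qed.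

Lemma ext0_le_indicator (v : 'rV[R]_n) k :
  `|ext0 v k| <= `|(`|v| * seq_indicator n k)|.
Proof.
case: (ltnP k n) => kn; last by rewrite ext0_ge // normr0.
by rewrite (ext0_lt _ kn) /seq_indicator kn mulr1 normr_id mx_entry_norm_le.
Qed.

Lemma ydom_ext0 (v : 'rV[R]_n) : ydom Y (ext0 v).
Proof. by case: (yideal (ydomZ `|v| (ydom_seq_indicator n)) (ext0_le_indicator v)). Qed.

Lemma Ynorm_n_le (v : 'rV[R]_n) : N v <= `|v| * ynorm Y (seq_indicator n).
Proof.
have [_] := yideal (ydomZ `|v| (ydom_seq_indicator n)) (ext0_le_indicator v).
by rewrite ynormZ ?normr_id //; exact: ydom_seq_indicator.
Qed.

Lemma Ynorm_nD (u v : 'rV[R]_n) : N (u + v) <= N u + N v.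
Proof. by rewrite /Ynorm_n ext0D; apply: ynormD; exact: ydom_ext0. Qed.

Lemma Ynorm_nZ a (v : 'rV[R]_n) : N (a *: v) = `|a| * N v.
Proof. by rewrite /Ynorm_n ext0Z ynormZ //; exact: ydom_ext0. Qed.

Lemma Ynorm_nN (v : 'rV[R]_n) : N (- v) = N v.
Proof. by rewrite -scaleN1r Ynorm_nZ normrN normr1 mul1r. Qed.

Lemma Ynorm_n0 : N 0 = 0.
Proof. by rewrite -(scale0r 0) Ynorm_nZ normr0 mul0r. Qed.

Lemma Ynorm_n_sum I (r : seq I) (v : I -> 'rV[R]_n) :
  N (\sum_(i <- r) v i) <= \sum_(i <- r) N (v i).
Proof.
elim: r => [|i r IHr]; first by rewrite !big_nil Ynorm_n0.
by rewrite !big_cons; apply: le_trans (Ynorm_nD _ _) _; rewrite lerD2l.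
Qed.

Lemma Ynorm_n_mono (u v : 'rV[R]_n) :
  (forall j, `|u ord0 j| <= `|v ord0 j|) -> N u <= N v.
Proof.
move=> uv; suff /(yideal (ydom_ext0 v)) [] : forall k, `|ext0 u k| <= `|ext0 v k| by [].
move=> k; case: (ltnP k n) => kn; first by rewrite !(ext0_lt _ kn).
by rewrite !ext0_ge // normr0.
Qed.

Lemma Ynorm_n_lipschitz (u v : 'rV[R]_n) :
  `|N u - N v| <= ynorm Y (seq_indicator n) * `|u - v|.
Proof.
have := Ynorm_nD (u - v) v; have := Ynorm_nD (v - u) u.
rewrite !subrK -opprB Ynorm_nN; have := Ynorm_n_le (u - v).
by rewrite ler_norml; lra.
Qed.

Lemma Hn_Ynorm_n : Hn N.
Proof.
split; first exact: lipschitz_continuous Ynorm_n_lipschitz.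
by move=> t v t0; rewrite Ynorm_nZ ger0_norm.
Qed.

End YnormFinite.

Section FiniteHahnBanach.
Variables (R : realType) (V : lmodType R) (p : V -> R).
Hypotheses (pD : forall x y, p (x + y) <= p x + p y)
  (pZ : forall t x, 0 <= t -> p (t *: x) = t * p x).

Definition subspace (D : set V) := D 0 /\ forall a x y, D x -> D y -> D (a *: x + y).

Definition linear_on (D : set V) (f : V -> R) :=
  forall a x y, D x -> D y -> f (a *: x + y) = a * f x + f y.

Definition add_line (D : set V) (y : V) :=
  [set z | exists m t, D m /\ z = m + t *: y].

Fixpoint add_lines (D : set V) (ys : seq V) : set V :=
  if ys is y :: ys' then add_lines (add_line D y) ys' else D.

Lemma sublinear0 : p 0 = 0.
Proof. by have := pZ 0 (lexx 0); rewrite scale0r mul0r. Qed.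

Section Subspace.
Variable D : set V.
Hypothesis sD : subspace D.

Lemma subspaceD x y : D x -> D y -> D (x + y).
Proof. by move=> Dx Dy; have := sD.2 1 x y Dx Dy; rewrite scale1r. Qed.

Lemma subspaceZ a x : D x -> D (a *: x).
Proof. by move=> Dx; have := sD.2 a x 0 Dx sD.1; rewrite addr0. Qed.

Lemma subspaceN x : D x -> D (- x).
Proof. by rewrite -scaleN1r; exact: subspaceZ. Qed.

Lemma subspace_add_line y : subspace (add_line D y).
Proof.
split; first by exists 0, 0; rewrite scale0r addr0; split => //; exact: sD.1.
move=> a _ _ [m1 [t1 [Dm1 ->]]] [m2 [t2 [Dm2 ->]]].
exists (a *: m1 + m2), (a * t1 + t2); split; first exact: sD.2.
by rewrite scalerDr scalerA scalerDl addrACA.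
Qed.

Lemma sub_add_line y : D `<=` add_line D y.
Proof. by move=> x Dx; exists x, 0; rewrite scale0r addr0. Qed.

Lemma add_line_dir y : add_line D y y.
Proof. by exists 0, 1; rewrite scale1r add0r; split => //; exact: sD.1. Qed.

Lemma linear_on0 f : linear_on D f -> f 0 = 0.
Proof.
move=> lf; have := lf 1 0 0 sD.1 sD.1; rewrite scale1r addr0 mul1r => f00.
by apply: (addrI (f 0)); rewrite addr0 -f00.
Qed.

Lemma linear_onD f x y : linear_on D f -> D x -> D y -> f (x + y) = f x + f y.
Proof. by move=> lf Dx Dy; have := lf 1 x y Dx Dy; rewrite scale1r mul1r. Qed.

Lemma linear_onZ f a x : linear_on D f -> D x -> f (a *: x) = a * f x.
Proof. by move=> lf Dx; have := lf a x 0 Dx sD.1; rewrite !addr0 (linear_on0 lf) addr0. Qed.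

End Subspace.

Lemma add_line_coord_uniq D y m t m' t' : subspace D -> ~ D y -> D m -> D m' ->
  m + t *: y = m' + t' *: y -> m = m' /\ t = t'.
Proof.
move=> sD Dy Dm Dm' E.
have ytt : (t - t') *: y = m' - m.
  have -> : m' = m + t *: y - t' *: y by rewrite E addrK.
  by rewrite scalerBl [in RHS]addrAC [m + _]addrC addrK.
suff tt : t = t' by split=> //; move: E; rewrite tt; exact: addIr.
apply/eqP; rewrite -subr_eq0; apply/negP => /negP tt; apply: Dy.
have -> : y = (t - t')^-1 *: (m' - m) by rewrite -ytt scalerA mulVf // scale1r.
by apply: subspaceZ => //; apply: subspaceD => //; exact: subspaceN.
Qed.

(* Well defined on D + Ry only when y \notin D, where the decomposition m + t y is unique. *)
Definition line_ext (D : set V) (f : V -> R) (y : V) (c : R) (z : V) : R :=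
  match pselect (exists mt : V * R, D mt.1 /\ z = mt.1 + mt.2 *: y) with
  | left H => let mt := proj1_sig (cid H) in f mt.1 + mt.2 * c
  | right _ => 0
  end.

Lemma line_extE D f y c m t : subspace D -> ~ D y -> D m ->
  line_ext D f y c (m + t *: y) = f m + t * c.
Proof.
move=> sD Dy Dm; rewrite /line_ext; case: pselect => [H|]; last first.
  by case; exists (m, t).
case: (cid H) => [[m' t'] [/= Dm' E]] /=.
by have [-> ->] := add_line_coord_uniq sD Dy Dm' Dm (esym E).
Qed.

Section OneStep.
Variables (D : set V) (f : V -> R) (y : V) (c : R).
Hypotheses (sD : subspace D) (lf : linear_on D f) (fp : forall x, D x -> f x <= p x)
  (cA : forall m, D m -> f m - p (m - y) <= c)
  (cB : forall m, D m -> c <= p (m + y) - f m).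

Lemma line_ext_dominated m t : D m -> f m + t * c <= p (m + t *: y).
Proof.
move=> Dm; have [->|tn0] := eqVneq t 0.
  by rewrite scale0r addr0 mul0r addr0 fp.
have [t_gt0|t_lt0] := ltP 0 t.
  have := cB (subspaceZ sD t^-1 Dm); rewrite (linear_onZ sD _ lf Dm) lerBrDr => ct.
  have -> : m + t *: y = t *: (t^-1 *: m + y).
    by rewrite scalerDr scalerA mulfV // scale1r.
  rewrite pZ; last exact: ltW.
  have := ler_wpM2l (ltW t_gt0) ct.
  by rewrite mulrDr mulrA mulfV // mul1r; lra.
have s_gt0 : 0 < - t by rewrite oppr_gt0 lt_neqAle tn0 t_lt0.
have := cA (subspaceZ sD (- t)^-1 Dm); rewrite (linear_onZ sD _ lf Dm) lerBlDr => ct.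
have -> : m + t *: y = (- t) *: ((- t)^-1 *: m - y).
  by rewrite scalerDr scalerA mulfV ?oppr_eq0 // scale1r scalerN scaleNr opprK.
rewrite pZ; last exact: ltW.
have := ler_wpM2l (ltW s_gt0) ct.
by rewrite mulrDr mulrA mulfV ?oppr_eq0 // mul1r; lra.
Qed.

Lemma hahn_banach_line : exists g, [/\ linear_on (add_line D y) g,
  (forall x, D x -> g x = f x), (forall x, add_line D y x -> g x <= p x)
  & ~ D y -> g y = c].
Proof.
have [Dy|nDy] := pselect (D y).
  have sub : add_line D y `<=` D.
    by move=> _ [m [t [Dm ->]]]; apply: subspaceD => //; exact: subspaceZ.
  by exists f; split => // [a x z /sub Dx /sub Dz|x /sub]; [exact: lf|exact: fp].
exists (line_ext D f y c); split => //.
- move=> a _ _ [m1 [t1 [Dm1 ->]]] [m2 [t2 [Dm2 ->]]].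
  have -> : a *: (m1 + t1 *: y) + (m2 + t2 *: y) = (a *: m1 + m2) + (a * t1 + t2) *: y.
    by rewrite scalerDr scalerA scalerDl addrACA.
  rewrite !line_extE // ?lf //; [ring | exact: sD.2].
- by move=> x Dx; have := line_extE f c 0 sD nDy Dx; rewrite scale0r addr0 mul0r addr0.
- by move=> _ [m [t [Dm ->]]]; rewrite line_extE //; exact: line_ext_dominated.
- have := line_extE f c 1 sD nDy sD.1.
  by rewrite scale1r add0r (linear_on0 sD lf) mul1r add0r.
Qed.

End OneStep.

Lemma hahn_banach_lines ys D f : subspace D -> linear_on D f ->
  (forall x, D x -> f x <= p x) ->
  exists g, [/\ linear_on (add_lines D ys) g, (forall x, D x -> g x = f x)
    & forall x, add_lines D ys x -> g x <= p x].
Proof.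
elim: ys D f => [|y ys IHys] D f sD lf fp /=; first by exists f.
have sep m m' : D m -> D m' -> f m - p (m - y) <= p (m' + y) - f m'.
  move=> Dm Dm'; have := fp _ (subspaceD sD Dm Dm').
  have := pD (m - y) (m' + y); rewrite addrACA addNr addr0 (linear_onD lf Dm Dm').
  lra.
pose A := [set f m - p (m - y) | m in D].
have supA : has_sup A.
  split; first by exists (f 0 - p (0 - y)), 0 => //; exact: sD.1.
  by exists (p (0 + y) - f 0) => _ [m Dm <-]; apply: sep => //; exact: sD.1.
have cA m : D m -> f m - p (m - y) <= sup A.
  by move=> Dm; apply: sup_upper_bound => //; exists m.
have cB m : D m -> sup A <= p (m + y) - f m.
  by move=> Dm; apply: ge_sup => [|_ [m' Dm' <-]]; [exact: supA.1 | exact: sep].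
have [g1 [lg1 g1f g1p _]] := hahn_banach_line sD lf fp cA cB.
have [g [lg gg1 gp]] := IHys _ g1 (subspace_add_line sD y) lg1 g1p.
by exists g; split => // x Dx; rewrite gg1 ?g1f //; exact: sub_add_line.
Qed.

Lemma subspace_add_lines ys D : subspace D -> subspace (add_lines D ys).
Proof. by elim: ys D => [|y ys IHys] D sD //=; apply/IHys/subspace_add_line. Qed.

Lemma sub_add_lines ys D : subspace D -> D `<=` add_lines D ys.
Proof.
elim: ys D => [|y ys IHys] D sD //= x Dx.
by apply: IHys; [exact: subspace_add_line | exact: sub_add_line].
Qed.

Lemma add_lines_mem ys D y : subspace D -> y \in ys -> add_lines D ys y.
Proof.
elim: ys D => [|z ys IHys] D sD //=; rewrite in_cons => /orP[/eqP ->|yys].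
  by apply: sub_add_lines; [exact: subspace_add_line | exact: add_line_dir].
by apply: IHys => //; exact: subspace_add_line.
Qed.

Lemma hahn_banach_finite (a : V) (ys : seq V) : add_lines [set 0] (a :: ys) = setT ->
  exists g : {scalar V}, (forall v, g v <= p v) /\ g a = p a.
Proof.
move=> full.
have s0 : subspace [set 0] by split => // t x z -> ->; rewrite scaler0 addr0.
have l0 : linear_on [set 0] (fun _ => 0) by move=> *; rewrite mulr0 addr0.
have f0 x : [set 0] x -> 0 <= p x by move=> ->; rewrite sublinear0.
have cA m : [set 0] m -> 0 - p (m - a) <= p a.
  by move=> ->; have := pD a (0 - a); rewrite add0r subrr sublinear0; lra.
have cB m : [set 0] m -> p a <= p (m + a) - 0 by move=> ->; rewrite add0r subr0.
have [g1 [lg1 g1f g1p g1a]] := hahn_banach_line s0 l0 f0 cA cB.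
have [g [lg gg1 gp]] := hahn_banach_lines ys (subspace_add_line s0 a) lg1 g1p.
have {}full : add_lines (add_line [set 0] a) ys = setT := full.
rewrite full in lg gp.
have glin : scalar g by move=> t u v; apply: lg.
pose gs : {scalar V} := HB.pack g (GRing.isLinear.Build _ _ _ _ g glin).
exists gs; split=> [v|/=]; first exact: gp.
rewrite gg1; last exact: add_line_dir.
have [->|na] := eqVneq a 0; first by rewrite g1f // sublinear0.
by apply: g1a => /= a0; rewrite a0 eqxx in na.
Qed.

End FiniteHahnBanach.

Lemma Hn_lincomb (R : realType) n (a b : R) (f g : 'rV[R]_n -> R) :
  Hn f -> Hn g -> Hn (fun v => a * f v + b * g v).
Proof.
move=> [cf hf] [cg hg]; split=> [v|t v t0]; last by rewrite hf // hg //; ring.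
apply: (@continuousD _ _ _ (fun v => a * f v) (fun v => b * g v)).
  exact: (@continuousZl_tmp _ _ _ f a v (cf v)).
exact: (@continuousZl_tmp _ _ _ g b v (cg v)).
Qed.

Lemma Hn_coord (R : realType) n (i : 'I_n) : Hn (fun v : 'rV[R]_n => v ord0 i).
Proof.
split=> [|t v _]; last by rewrite mxE.
apply: (@lipschitz_continuous _ _ _ _ 1) => u v.
by rewrite mul1r; have := mx_entry_norm_le (u - v) ord0 i; rewrite !mxE.
Qed.

Lemma Hn_cst0 (R : realType) n : Hn (fun v : 'rV[R]_n => 0).
Proof. by split=> [v|t v _]; [exact: cst_continuous | rewrite mulr0]. Qed.

Lemma Hn_linear_form (R : realType) n (b : 'I_n -> R) (r : seq 'I_n) :
  Hn (fun v : 'rV[R]_n => \sum_(j <- r) b j * v ord0 j).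
Proof.
elim: r => [|i r IHr].
  by under eq_fun do rewrite big_nil; exact: Hn_cst0.
under eq_fun do rewrite big_cons -[\sum_(_ <- r) _]mul1r.
exact/Hn_lincomb/IHr/Hn_coord.
Qed.

Section KrivineCalculus.
Variables (R : realType) (X : completeNormedModType R) (L : banach_lattice X)
  (n : nat) (x : 'I_n -> X) (tau : ('rV[R]_n -> R) -> X).
Hypothesis kt : is_krivine L x tau.

Lemma krivine_lincomb f g a b : Hn f -> Hn g ->
  tau (fun v => a * f v + b * g v) = a *: tau f + b *: tau g.
Proof. by case: kt => lin _ _; exact: lin. Qed.

Lemma krivine0 : tau (fun _ => 0) = 0.
Proof.
have := krivine_lincomb 0 0 (@Hn_cst0 R n) (@Hn_cst0 R n).
by rewrite !scale0r addr0 => <-; congr tau; apply: funext => v; rewrite mul0r addr0.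
Qed.

Lemma krivine_opp f : Hn f -> tau (fun v => - f v) = - tau f.
Proof.
move=> Hf; rewrite -scaleN1r -[RHS]addr0 -(scale0r (tau f)) -krivine_lincomb //.
by congr tau; apply: funext => v; rewrite mul0r addr0 mulN1r.
Qed.

Lemma krivine_le f g : Hn f -> Hn g -> (forall v, f v <= g v) -> ble L (tau f) (tau g).
Proof.
move=> Hf Hg fg; case: kt => _ _ tau_max.
have <- : (fun v => Num.max (f v) (g v)) = g by apply: funext => v; rewrite max_r.
rewrite tau_max //; exact: bsup_ubl.
Qed.

Lemma krivine_norm_le f g : Hn f -> Hn g -> (forall v, `|f v| <= g v) ->
  `|tau f| <= `|tau g|.
Proof.
move=> Hf Hg fg; apply: (@bnorm_mono R X L); apply: bsup_least.
  apply: ble_trans (bsup_ubl L _ _); apply: krivine_le => // v.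
  exact: le_trans (ler_norm _) (fg v).
have Hnf : Hn (fun v => - f v).
  by have := Hn_lincomb (-1) 0 Hf Hf; under eq_fun do rewrite mul0r addr0 mulN1r.
rewrite -krivine_opp //; apply: ble_trans (bsup_ubl L _ _); apply: krivine_le => // v.
by rewrite lerNl; have := fg v; rewrite ler_norml => /andP[].
Qed.

Lemma krivine_linear_form (b : 'I_n -> R) (r : seq 'I_n) :
  tau (fun v => \sum_(j <- r) b j * v ord0 j) = \sum_(j <- r) b j *: x j.
Proof.
elim: r => [|i r IHr].
  by rewrite big_nil -krivine0; congr tau; apply: funext => v; rewrite big_nil.
rewrite big_cons -IHr -[tau (fun v => \sum_(_ <- r) _)]scale1r.
have [_ coord _] := kt.
rewrite -(coord i) -krivine_lincomb; [|exact: Hn_coord|exact: Hn_linear_form].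
by congr tau; apply: funext => v; rewrite big_cons mul1r.
Qed.

End KrivineCalculus.

Lemma scalar_row_form (R : realType) n (g : {scalar 'rV[R]_n}) (v : 'rV[R]_n) :
  g v = \sum_(j < n) g (delta_mx 0 j) * v ord0 j.
Proof.
rewrite {1}(row_sum_delta v) linear_sum; apply: eq_bigr => j _.
by rewrite scalarZ mulrC.
Qed.

Lemma Ynorm_n_scalar_le (R : realType) (X : completeNormedModType R)
    (L : banach_lattice X) (Y : seq_lattice R) n (x : 'I_n -> X)
    (tau : ('rV[R]_n -> R) -> X) (phi : {scalar X}) (K : R) :
  is_krivine L x tau -> 0 <= K -> (forall u, `|phi u| <= K * `|u|) ->
  Ynorm_n Y (\row_j phi (x j)) <= K * `|tau (@Ynorm_n R Y n)|.
Proof.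
move=> kt K_ge0 phiK; set N := @Ynorm_n R Y n; set a := \row_j phi (x j).
pose basis := [seq (delta_mx 0 j : 'rV[R]_n) | j <- enum 'I_n].
have s0 : subspace [set (0 : 'rV[R]_n)] by split => // t u z -> ->; rewrite scaler0 addr0.
have full : add_lines [set 0] (a :: basis) = setT.
  have sD := subspace_add_lines basis (subspace_add_line s0 a).
  apply/seteqP; split => // v _; rewrite (row_sum_delta v).
  apply: (big_ind (add_lines _ _)) => [|u w|j _]; first exact: sD.1.
    exact: subspaceD.
  apply: subspaceZ => //; apply: add_lines_mem s0 _.
  by rewrite in_cons map_f ?orbT // mem_enum.
have NZ t v : 0 <= t -> N (t *: v) = t * N v by move=> t0; rewrite /N Ynorm_nZ ger0_norm.
have [g [gN ga]] := hahn_banach_finite (@Ynorm_nD R Y n) NZ full.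
pose b j := g (delta_mx 0 j).
have gE : (g : 'rV[R]_n -> R) = fun v => \sum_(j < n) b j * v ord0 j.
  by apply: funext => v; exact: scalar_row_form.
have Hg : Hn g by rewrite gE; exact: Hn_linear_form.
have gN_abs v : `|g v| <= N v.
  rewrite ler_norml gN andbT lerNl -linearN.
  by apply: le_trans (gN _) _; rewrite /N Ynorm_nN.
have phi_tau_g : phi (tau g) = N a.
  rewrite gE (krivine_linear_form kt) linear_sum -[N a]ga scalar_row_form.
  by apply: eq_bigr => j _; rewrite scalarZ mxE.
rewrite -phi_tau_g; apply: le_trans (ler_norm _) _; apply: le_trans (phiK _) _.
by rewrite ler_wpM2l // (krivine_norm_le kt Hg (Hn_Ynorm_n Y n)).
Qed.

Section FiniteDimensionalSpan.
Variables (R : realType) (E : normedModType R).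

Definition lcomb (s : seq E) (d : 'rV[R]_(size s)) : E :=
  \sum_(i < size s) d ord0 i *: s`_i.
Arguments lcomb : clear implicits.

Fact lcomb_is_linear s : linear (lcomb s).
Proof.
move=> a d d'; rewrite /lcomb scaler_sumr -big_split; apply: eq_bigr => i _.
by rewrite !mxE scalerDl scalerA.
Qed.

HB.instance Definition _ s := GRing.isLinear.Build R _ E *:%R (lcomb s) (@lcomb_is_linear s).

Definition lin_indep (s : seq E) := forall d, lcomb s d = 0 -> d = 0.

Definition in_span (s : seq E) (v : E) := exists d, v = lcomb s d.

Lemma in_span0 s : in_span s 0.
Proof. by exists 0; rewrite linear0. Qed.

Lemma in_spanD s u v : in_span s u -> in_span s v -> in_span s (u + v).
Proof. by move=> [d ->] [d' ->]; exists (d + d'); rewrite linearD. Qed.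

Lemma in_spanZ s a v : in_span s v -> in_span s (a *: v).
Proof. by move=> [d ->]; exists (a *: d); rewrite linearZ. Qed.

Lemma in_span_mem s v : v \in s -> in_span s v.
Proof.
move=> vs; have vs_lt : (index v s < size s)%N by rewrite index_mem.
exists (delta_mx 0 (Ordinal vs_lt)); rewrite /lcomb (bigD1 (Ordinal vs_lt)) //=.
rewrite big1 ?addr0 => [|i /negbTE ni]; last by rewrite mxE ni andbF scale0r.
by rewrite mxE !eqxx scale1r nth_index.
Qed.

Definition row_behead m (d : 'rV[R]_m.+1) : 'rV[R]_m := \row_j d ord0 (lift ord0 j).

Definition row_cons m (c : R) (d : 'rV[R]_m) : 'rV[R]_m.+1 :=
  \row_i oapp (d ord0) c (unlift ord0 i).

Lemma row_cons0 m c (d : 'rV[R]_m) : row_cons c d ord0 ord0 = c.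
Proof. by rewrite mxE unlift_none. Qed.

Lemma row_behead_cons m c (d : 'rV[R]_m) : row_behead (row_cons c d) = d.
Proof. by apply/rowP => j; rewrite !mxE liftK. Qed.

Lemma lcomb_cons e s (d : 'rV[R]_(size s).+1) :
  lcomb (e :: s) d = d ord0 ord0 *: e + lcomb s (row_behead d).
Proof.
by rewrite /lcomb big_ord_recl; congr (_ + _); apply: eq_bigr => j _; rewrite mxE.
Qed.

Lemma lin_indep_span s : exists s', lin_indep s' /\ forall v, in_span s v -> in_span s' v.
Proof.
elim: s => [|e s [s' [s'_indep s_sub]]].
  by exists [::]; split => [d _|//]; apply/rowP => -[].
have s_sub_cons d : exists d2, lcomb s (row_behead d) = lcomb s' d2.
  exact: s_sub (ex_intro _ _ erefl).
have [[de ->]|e_out] := pselect (in_span s' e).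
  exists s'; split => // _ [d ->]; rewrite lcomb_cons.
  have [d2 ->] := s_sub_cons d.
  by exists (d ord0 ord0 *: de + d2); rewrite linearP.
exists (e :: s'); split => [d|_ [d ->]]; last first.
  rewrite lcomb_cons; have [d2 ->] := s_sub_cons d.
  by exists (row_cons (d ord0 ord0) d2); rewrite lcomb_cons row_cons0 row_behead_cons.
rewrite lcomb_cons => d0.
have d00 : d ord0 ord0 = 0.
  apply/eqP; apply: contraT => nz; case: e_out.
  exists (- (d ord0 ord0)^-1 *: row_behead d); rewrite linearZ.
  apply: (scalerI nz); rewrite scalerA mulrN mulfV // scaleN1r.
  by apply/eqP; rewrite -addr_eq0 d0.
move: d0; rewrite d00 scale0r add0r => /s'_indep d_tail.
apply/rowP => -[[|k] kn]; rewrite mxE.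
  by rewrite -d00; congr (d ord0 _); apply: val_inj.
have := congr1 (fun r : 'rV[R]_(size s') => r ord0 (Ordinal (kn : (k < size s')%N))) d_tail.
by rewrite !mxE => <-; congr (d _ _); apply: val_inj.
Qed.

Lemma lcomb_norm_le s d : `|lcomb s d| <= `|d| * \sum_(i < size s) `|s`_i|.
Proof.
rewrite /lcomb mulr_sumr; apply: le_trans (ler_norm_sum _ _ _) _.
by apply: ler_sum => i _; rewrite normrZ ler_wpM2r // mx_entry_norm_le.
Qed.

Lemma lcomb_continuous s : continuous (lcomb s).
Proof.
apply: (@lipschitz_continuous _ _ _ _ (\sum_(i < size s) `|s`_i|)) => d d'.
by rewrite -linearB mulrC lcomb_norm_le.
Qed.

(* Norm equivalence in finite dimension: |lcomb s| attains a positive minimum on the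
   (compact) unit sphere. *)
Lemma lin_indep_lcomb_ge s : lin_indep s ->
  exists2 mu, 0 < mu & forall d, mu * `|d| <= `|lcomb s d|.
Proof.
move=> s_indep; pose sphere := [set d : 'rV[R]_(size s) | `|d| = 1].
have sphere_compact : compact sphere.
  apply: bounded_closed_compact.
    by exists 1; split; [exact: num_real | move=> M M1 d /= ->; exact: ltW].
  apply: (@preimage_closed _ _ (fun d : 'rV[R]_(size s) => `|d|) [set 1]).
    by move=> d _; exact: norm_continuous.
  exact: closed_eq.
pose f d := `|lcomb s d|.
have f_cont : continuous f.
  by move=> d; apply: continuous_comp; [exact: lcomb_continuous | exact: norm_continuous].
have img_closed : closed (f @` sphere).
  apply: compact_closed => //; apply: continuous_compact => //.
  exact: continuous_subspaceT.
have img0 : ~ (f @` sphere) 0.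
  move=> [d d1 /eqP]; rewrite /f normr_eq0 => /eqP /s_indep d0.
  by move: d1; rewrite /sphere /= d0 normr0 => /esym/eqP; rewrite oner_eq0.
have : nbhs (0 : R) (~` (f @` sphere)) by apply: open_nbhs_nbhs; rewrite /open_nbhs openC.
move=> /nbhs_ballP [mu mu_gt0 ball_out]; exists mu => // d.
have [->|d_neq0] := eqVneq d 0; first by rewrite normr0 mulr0.
have d_gt0 : 0 < `|d| by rewrite normr_gt0.
have : ~ ball (0 : R) mu (f (`|d|^-1 *: d)).
  move=> /ball_out; apply; exists (`|d|^-1 *: d) => //.
  by rewrite /sphere /= normrZ normrV ?unitfE ?normr_eq0 // normr_id mulVf // normr_eq0.
rewrite /ball /= sub0r normrN /f linearZ normrZ normrV ?unitfE ?normr_eq0 // normr_id.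
rewrite ger0_norm; last by rewrite mulr_ge0 // invr_ge0.
by move=> /negP; rewrite -leNgt mulrC ler_pdivlMr // mulrC.
Qed.

End FiniteDimensionalSpan.
Arguments lcomb {R E} s d.

Lemma finite_rank_coordinates (R : realType) (X E : normedModType R)
    (S : {linear X -> E}) : is_bounded S -> finite_rank S ->
  exists (s : seq E) (phi : 'I_(size s) -> {scalar X}) (K : R),
    [/\ 0 <= K, forall x, S x = \sum_i phi i x *: s`_i
      & forall i x, `|phi i x| <= K * `|x|].
Proof.
move=> [C SC] [m [e Se]].
have [s [s_indep span_s]] := lin_indep_span [seq e i | i <- enum 'I_m].
have S_span x : in_span s (S x).
  apply: span_s; have [c ->] := Se x.
  apply: (big_ind (in_span _)) => [|u v|i _]; [exact: in_span0 | exact: in_spanD |].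
  by apply/in_spanZ/in_span_mem/map_f; rewrite mem_enum.
pose cv x := proj1_sig (cid (S_span x)).
have cvE x : S x = lcomb s (cv x) := proj2_sig (cid (S_span x)).
have lcomb_inj d d' : lcomb s d = lcomb s d' -> d = d'.
  by move=> dd'; apply/subr0_eq/s_indep; rewrite linearB /= dd' subrr.
have cv_lin i : scalar (fun x => cv x ord0 i).
  move=> a u v; suff -> : cv (a *: u + v) = a *: cv u + cv v by rewrite !mxE.
  by apply: lcomb_inj; rewrite linearP /= -!cvE linearP.
pose phi i : {scalar X} := HB.pack (fun x => cv x ord0 i)
  (GRing.isLinear.Build _ _ _ _ (fun x => cv x ord0 i) (cv_lin i)).
have [mu mu_gt0 mu_le] := lin_indep_lcomb_ge s_indep.
exists s, phi, (`|C| / mu); split => [|x|i x /=].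
- by rewrite divr_ge0 // ltW.
- by rewrite cvE.
apply: le_trans (mx_entry_norm_le (cv x) ord0 i) _.
rewrite mulrAC ler_pdivlMr // mulrC; apply: le_trans (mu_le _) _.
by rewrite -cvE; apply: le_trans (SC x) _; rewrite ler_wpM2r // ler_norm.
Qed.

Lemma EYnorm_lcomb_le (R : realType) (E : normedModType R) (Y : seq_lattice R) m n
    (e : 'I_m -> E) (c : 'I_m -> 'I_n -> R) (w : 'I_n -> E) :
  (forall j, w j = \sum_i c i j *: e i) ->
  EYnorm Y w <= \sum_i `|e i| * Ynorm_n Y (\row_j c i j).
Proof.
move=> wE; rewrite /EYnorm.
apply: le_trans (_ : _ <= Ynorm_n Y (\sum_i `|e i| *: \row_j `|c i j|)) _.
  apply: Ynorm_n_mono => j; rewrite !mxE summxE normr_id wE.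
  apply: le_trans (ler_norm_sum _ _ _) (le_trans _ (ler_norm _)).
  by apply: ler_sum => i _; rewrite !mxE normrZ mulrC.
apply: le_trans (Ynorm_n_sum _ _ _) _; apply: ler_sum => i _.
rewrite Ynorm_nZ normr_id ler_wpM2l //.
by apply: Ynorm_n_mono => j; rewrite !mxE normr_id.
Qed.

Theorem mainTheorem17 (R : realType) (X : completeNormedModType R)
  (L : banach_lattice X) (E : completeNormedModType R) (Y : seq_lattice R)
  (S : X -> E) :
  is_linear S -> is_bounded S -> finite_rank S -> Y_concave L Y S.
Proof.
move=> S_lin S_bnd S_rank.
pose Sl : {linear X -> E} := HB.pack S (GRing.isLinear.Build _ _ _ _ S S_lin).
have [s [phi [K [K_ge0 S_phi phi_le]]]] := @finite_rank_coordinates R X E Sl S_bnd S_rank.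
exists (1 + \sum_(i < size s) `|s`_i| * K); split.
  by rewrite ltr_pwDl // sumr_ge0 // => i _; rewrite mulr_ge0.
move=> n x tau kt.
have := @EYnorm_lcomb_le R E Y _ n (fun i => s`_i) (fun i j => phi i (x j)) _
  (fun j => S_phi (x j)).
move=> /le_trans; apply.
rewrite mulrDl mul1r mulr_suml ler_wpDl // ler_sum // => i _.
by rewrite -mulrA ler_wpM2l // (Ynorm_n_scalar_le Y kt K_ge0 (phi_le i)).
Qed.
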